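(* If $U$ is an atemporal action model over $L_{\mathsf{YDEL}}$, then $U^\sharp$ is an action model over $L_{\mathsf{RDETL}}$ of the kind allowed in $L_{\mathsf{RDETL}}$, i.e. $U^\sharp\in\mathsf{Act}(L_{\mathsf{RDETL}})$.
   Context: Fix a nonempty finite set $\mathsf{Agt}$ of agents and a nonempty set $\mathsf{Prop}$ of letters. Kripke models $M=(W^M,(\to^M_a)_a,\leadsto^M,V^M)$: nonempty $W^M$, binary relations $\to^M_a,\leadsto^M$, valuation $V^M:\mathsf{Prop}\to\mathcal P(W^M)$. Action models over a set of formulas $F$: $U=(W^U,(\to^U_a)_a,\leadsto^U,\mathrm{pre}^U)$ with $W^U$ nonempty finite, binary relations, $\mathrm{pre}^U:W^U\to F$; atemporal means $\leadsto^U=\emptyset$; $s$ is a past state if no $s'\leadsto^Us$. $L_{\mathsf{DETL}}$: $\varphi::=p\mid\neg\varphi\mid\varphi\wedge\varphi\mid\Box_a\varphi\mid[Y]\varphi\mid[U,s]\varphi$ with $(U,s)$ any pointed action model over $L_{\mathsf{DETL}}$; semantics: Boolean standard, $\Box_a$ over $\to^M_a$-successors, $[Y]$ over $\leadsto^M$-predecessors, and $M,w\models[U,s]\varphi$ iff $M,w\models\mathrm{pre}^U(s)$ implies $M[U],(w,s)\models\varphi$, where $M[U]$ has worlds $\{(v,t):M,v\models\mathrm{pre}^U(t)\}$, $(v,t)\to_a(v',t')$ iff $v\to^M_av'$ and $t\to^U_at'$, $(v',t')\leadsto(v,t)$ iff ($v'\leadsto^Mv$, $t'=t$, $t$ past state)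 or ($v'=v$, $t'\leadsto^Ut$), valuation inherited from $M$; $\models\varphi$ means truth at all pointed Kripke models. $L_{\mathsf{YDEL}}$ is the fragment of $L_{\mathsf{DETL}}$ in which all action models used (recursively) are atemporal; the symbol $\flat$ is never a world or event of it. Progressions, histories, depth: a progression is a finite nonempty $x_0,\dots,x_n$ with $x_i\leadsto x_{i+1}$; a history cannot be extended at its beginning; $\mathrm{depth}(x)$ is the maximal length of a history ending at $x$ ($\infty$ if none). Action model properties: depth-definedness (all depths finite); knowledge of the past ($w'\leadsto w\to_av$ implies $\exists v'\leadsto v$); knowledge of the initial time ($w\to_av$ and no $w'\leadsto w$ imply no $v'\leadsto v$); uniqueness of the past; perfect recall ($w\leadsto v\to_av'$ implies $\exists w'$, $w\to_aw'\leadsto v'$); history preservation ($s'\leadsto^Us$ implies $\models\mathrm{pre}^U(s)\to\mathrm{pre}^U(s')$, and every past state is an epistemic past state, i.e. a past state with valid precondition whose only outgoing epistemic arrows are the loops $s\to_as$ for each $a$). $L_{\mathsf{RDETL}}$ is the sublanguage of $L_{\mathsf{DETL}}$ allowing only $[U,s]$ with $U$ having preconditions (recursively) in $L_{\mathsf{RDETL}}$ and satisfying depth-definedness, knowledge of the past, history preservation, knowledge of the initial time, uniqueness of the past and perfect recall; $\mathsf{Act}(L_{\mathsf{RDETL}})$ denotes the set of such action models. Translation $\sharp$: $\bot^\sharp=\bot$, $p^\sharp=p$, $\sharp$ commutes with $\neg$, $\wedge$, $\Box_a$, $[Y]$, and $([U,s]\varphi)^\sharp=[U^\sharp,s]\varphi^\sharp$,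 where $W^{U^\sharp}=W^U\cup\{\flat\}$; $s\to^{U^\sharp}_as'$ iff $s\to^U_as'$ or $s=s'=\flat$; $s\leadsto^{U^\sharp}s'$ iff $s=\flat$ and $s'\in W^U$; $\mathrm{pre}^{U^\sharp}(s)=\mathrm{pre}^U(s)^\sharp$ for $s\in W^U$ and $\mathrm{pre}^{U^\sharp}(\flat)=\top$. *)

From mathcomp Require Import all_boot.
Set Implicit Arguments. Unset Strict Implicit. Unset Printing Implicit Defensive.

Section DETL.
Variables (A : finType) (P : Type) .

(* Formulas of L_DETL.  [Dyn n acc tmp pre s phi] is [U,s]phi where U has
   events 'I_n.+1 (finite, nonempty), epistemic relations acc, temporal
   relation tmp and preconditions pre. *)
Inductive form : Type :=
| Var of P
| Neg of form
| And of form & form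
| Box of A & form
| Yest of form
| Dyn (n : nat) (acc : A -> 'I_n.+1 -> 'I_n.+1 -> Prop)
      (tmp : 'I_n.+1 -> 'I_n.+1 -> Prop) (pre : 'I_n.+1 -> form)
      (s : 'I_n.+1) (phi : form).

Definition Imp (f g : form) : form := Neg (And f (Neg g)).
Definition bot (p0 : P) : form := And (Var p0) (Neg (Var p0)).
Definition top (p0 : P) : form := Neg (bot p0).

Record amodel := AM {
  asz : nat;
  aacc : A -> 'I_asz.+1 -> 'I_asz.+1 -> Prop;
  atmp : 'I_asz.+1 -> 'I_asz.+1 -> Prop;
  apre : 'I_asz.+1 -> form }.

Record kmodel := KM {
  kW : Type;
  kacc : A -> kW -> kW -> Prop;
  ktmp : kW -> kW -> Prop;
  kval : P -> kW -> Prop }.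

Definition pastst {E : Type} (tmp : E -> E -> Prop) (s : E) : Prop :=
  ~ exists s', tmp s' s.

(* product update M[U]; Pre t v stands for  M,v |= pre(t) *)
Definition prodm (M : kmodel) (n : nat) (acc : A -> 'I_n.+1 -> 'I_n.+1 -> Prop)
  (tmp : 'I_n.+1 -> 'I_n.+1 -> Prop) (Pre : 'I_n.+1 -> kW M -> Prop) : kmodel :=
  {| kW := {x : kW M * 'I_n.+1 | Pre x.2 x.1};
     kacc := fun a x y => @kacc M a (sval x).1 (sval y).1 /\ acc a (sval x).2 (sval y).2;
     ktmp := fun x y =>
       (@ktmp M (sval x).1 (sval y).1 /\ (sval x).2 = (sval y).2 /\ pastst tmp (sval y).2)
       \/ ((sval x).1 = (sval y).1 /\ tmp (sval x).2 (sval y).2);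
     kval := fun p x => @kval M p (sval x).1 |}.

Fixpoint sat (phi : form) : forall M : kmodel, kW M -> Prop :=
  match phi with
  | Var p => fun M w => @kval M p w
  | Neg f => fun M w => ~ @sat f M w
  | And f g => fun M w => @sat f M w /\ @sat g M w
  | Box a f => fun M w => forall v, @kacc M a w v -> @sat f M v
  | Yest f => fun M w => forall v, @ktmp M v w -> @sat f M v
  | Dyn n acc tmp pre s f => fun M w =>
      forall H : @sat (pre s) M w,
        @sat f (@prodm M n acc tmp (fun t v => @sat (pre t) M v)) (exist _ (w, s) H)
  end.

Definition valid (f : form) : Prop := forall (M : kmodel) (w : kW M), @sat f M w.

Fixpoint chain {E : Type} (R : E -> E -> Prop) (x : E) (l : seq E) : Prop :=
  match l with
  | [::] => True
  | y :: l' => R x y /\ chain R y l'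
  end.

Definition history {E : Type} (R : E -> E -> Prop) (x : E) (l : seq E) : Prop :=
  chain R x l /\ ~ (exists y, R y x).

Definition depth_finite {E : Type} (R : E -> E -> Prop) (z : E) : Prop :=
  exists N : nat,
    (exists x l, history R x l /\ last x l = z /\ (size l).+1 = N) /\
    (forall x l, history R x l -> last x l = z -> (size l).+1 <= N).

Section Props.
Variables (E : Type) (acc : A -> E -> E -> Prop) (tmp : E -> E -> Prop) (pre : E -> form).

Definition depth_defined := forall x, depth_finite tmp x.
Definition knowledge_of_past :=
  forall a w' w v, tmp w' w -> acc a w v -> exists v', tmp v' v.
Definition knowledge_of_initial_time :=
  forall a w v, acc a w v -> pastst tmp w -> pastst tmp v.
Definition uniqueness_of_past := forall w w' v, tmp w v -> tmp w' v -> w = w'.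
Definition perfect_recall :=
  forall a w v v', tmp w v -> acc a v v' -> exists w', acc a w w' /\ tmp w' v'.
Definition epistemic_past_state (s : E) :=
  pastst tmp s /\ valid (pre s) /\ forall a, acc a s s /\ (forall t, acc a s t -> t = s).
Definition history_preserving :=
  (forall s' s, tmp s' s -> valid (Imp (pre s) (pre s'))) /\
  (forall s, pastst tmp s -> epistemic_past_state s).

Definition RDETL_conditions :=
  depth_defined /\ knowledge_of_past /\ history_preserving /\
  knowledge_of_initial_time /\ uniqueness_of_past /\ perfect_recall.
End Props.

Fixpoint inRDETL (phi : form) : Prop :=
  match phi with
  | Var _ => True
  | Neg f => inRDETL f
  | And f g => inRDETL f /\ inRDETL g
  | Box _ f => inRDETL f
  | Yest f => inRDETL f
  | Dyn n acc tmp pre s f =>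
      (forall t, inRDETL (pre t)) /\ RDETL_conditions acc tmp pre /\ inRDETL f
  end.

Definition atemporal (U : amodel) : Prop := forall t t', ~ @atmp U t t'.

Fixpoint inYDEL (phi : form) : Prop :=
  match phi with
  | Var _ => True
  | Neg f => inYDEL f
  | And f g => inYDEL f /\ inYDEL g
  | Box _ f => inYDEL f
  | Yest f => inYDEL f
  | Dyn n acc tmp pre s f =>
      (forall t t', ~ tmp t t') /\ (forall t, inYDEL (pre t)) /\ inYDEL f
  end.

Definition in_Act_RDETL (U : amodel) : Prop :=
  (forall t, inRDETL (@apre U t)) /\ RDETL_conditions (@aacc U) (@atmp U) (@apre U).

(* the translation #: events of U# are 'I_n.+2, the old event t being
   widen t and flat being ord_max *)
Definition wid {n : nat} (t : 'I_n.+1) : 'I_n.+2 := widen_ord (leqnSn n.+1) t.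

Definition sharp_acc {n : nat} (acc : A -> 'I_n.+1 -> 'I_n.+1 -> Prop)
  (a : A) (t t' : 'I_n.+2) : Prop :=
  (exists u u', t = wid u /\ t' = wid u' /\ acc a u u') \/ (t = ord_max /\ t' = ord_max).

Definition sharp_tmp {n : nat} (t t' : 'I_n.+2) : Prop :=
  t = ord_max /\ exists u : 'I_n.+1, t' = wid u.

Variable p0 : P.

Fixpoint sharp (phi : form) : form :=
  match phi with
  | Var p => Var p
  | Neg f => Neg (sharp f)
  | And f g => And (sharp f) (sharp g)
  | Box a f => Box a (sharp f)
  | Yest f => Yest (sharp f)
  | Dyn n acc tmp pre s f =>
      Dyn (n := n.+1) (sharp_acc acc) (@sharp_tmp n)
        (fun t : 'I_n.+2 => if val t < n.+1 then sharp (pre (inord (val t))) else top p0)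
        (wid s) (sharp f)
  end.

Definition sharp_am (U : amodel) : amodel :=
  {| asz := (asz U).+1;
     aacc := sharp_acc (@aacc U);
     atmp := @sharp_tmp (asz U);
     apre := fun t => if val t < (asz U).+1 then sharp (@apre U (inord (val t))) else top p0 |}.

End DETL.

From mathcomp Require Import all_boot.
Set Implicit Arguments. Unset Strict Implicit.

(* The only temporal arrows of U# leave the fresh event flat, which has no
   predecessor, valid precondition [top] and only the epistemic loops.  Hence
   every history has at most two events and each of the six conditions reduces
   to a case split between flat and the old events. *)

Section SharpActionModel.
Variables (A : finType) (P : Type) (n : nat) (acc : A -> 'I_n.+1 -> 'I_n.+1 -> Prop).

Local Notation tmp := (@sharp_tmp n).
Local Notation sacc := (sharp_acc acc).

Lemma wid_neq_max (u : 'I_n.+1) : wid u <> ord_max.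
Proof. by move=> /(congr1 val) /= eq_u; move: (ltn_ord u); rewrite eq_u ltnn. Qed.

Lemma ord_max_or_wid (t : 'I_n.+2) : t = ord_max \/ exists u : 'I_n.+1, t = wid u.
Proof.
case: (ltnP t n.+1) => [lt_t|ge_t].
- by right; exists (inord t); apply: ord_inj; rewrite /= inordK.
- by left; apply: ord_inj; apply/eqP; rewrite /= eqn_leq ge_t andbT -ltnS.
Qed.

Lemma sharp_tmp_wid (u : 'I_n.+1) : tmp ord_max (wid u).
Proof. by split=> //; exists u. Qed.

Lemma sharp_tmp_pred_max (s : 'I_n.+2) : ~ tmp s ord_max.
Proof. by move=> [_ [u /esym/wid_neq_max]]. Qed.

Lemma pastst_sharp_max : pastst tmp ord_max.
Proof. by move=> [s /sharp_tmp_pred_max]. Qed.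

Lemma pastst_sharpE (s : 'I_n.+2) : pastst tmp s -> s = ord_max.
Proof.
by case: (ord_max_or_wid s) => [//|[u ->] past_u]; case: past_u; exists ord_max; exact: sharp_tmp_wid.
Qed.

Lemma sharp_acc_max a (t : 'I_n.+2) : sacc a ord_max t -> t = ord_max.
Proof. by case=> [[u [u' [/esym/wid_neq_max]]]|[_ ->]]. Qed.

Lemma sharp_acc_wid a (u : 'I_n.+1) (t : 'I_n.+2) :
  sacc a (wid u) t -> exists u', t = wid u'.
Proof.
by case=> [[v [v' [_ [-> _]]]]|[/wid_neq_max]] //; exists v'.
Qed.

Lemma sharp_chain_short (x : 'I_n.+2) l :
  chain tmp x l -> l = [::] \/ (x = ord_max /\ exists u, l = [:: wid u]).
Proof.
case: l => [|y [|z l]] /=; first by left.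
- by move=> [[-> [u ->]] _]; right; split=> //; exists u.
- by move=> [[_ [u ->]] [[/wid_neq_max]]].
Qed.

Lemma sharp_depth_defined : depth_defined tmp.
Proof.
move=> z; exists (if z == ord_max then 1 else 2); split.
- case: eqP => [->|/eqP z_neq_max].
    by exists ord_max, [::]; split=> //; split=> //; exact: pastst_sharp_max.
  case: (ord_max_or_wid z) => [z_max|[u z_wid]]; first by rewrite z_max eqxx in z_neq_max.
  exists ord_max, [:: z]; split=> //; split; last exact: pastst_sharp_max.
  by split=> //; rewrite z_wid; exact: sharp_tmp_wid.
- move=> x l [chain_xl _]; case: (sharp_chain_short chain_xl) => [->|[_ [u ->]]] /=.
    by move=> _; case: eqP.
  by move=> <-; case: eqP => // /wid_neq_max.
Qed.

Lemma sharp_knowledge_of_past : knowledge_of_past sacc tmp.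
Proof.
move=> a w' w v [_ [u ->]] /sharp_acc_wid [u' ->].
by exists ord_max; exact: sharp_tmp_wid.
Qed.

Lemma sharp_knowledge_of_initial_time : knowledge_of_initial_time sacc tmp.
Proof.
move=> a w v acc_wv /pastst_sharpE w_max; rewrite w_max in acc_wv.
by rewrite (sharp_acc_max acc_wv); exact: pastst_sharp_max.
Qed.

Lemma sharp_uniqueness_of_past : uniqueness_of_past tmp.
Proof. by move=> w w' v [-> _] [-> _]. Qed.

Lemma sharp_perfect_recall : perfect_recall sacc tmp.
Proof.
move=> a w v v' [-> [u ->]] /sharp_acc_wid [u' ->].
by exists ord_max; split; [right | exact: sharp_tmp_wid].
Qed.

Lemma top_valid (p0 : P) : valid (top A p0).
Proof. by move=> M w /= []. Qed.

Lemma sharp_history_preserving (p0 : P) (pre : 'I_n.+2 -> form A P) :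
  pre ord_max = top A p0 -> history_preserving sacc tmp pre.
Proof.
move=> pre_max; split.
- move=> s' s [-> _] M w /=; rewrite pre_max => -[_]; apply; exact: top_valid.
- move=> s /pastst_sharpE ->; split; first exact: pastst_sharp_max.
  split; first by rewrite pre_max; exact: top_valid.
  by move=> a; split; [right | move=> t; exact: sharp_acc_max].
Qed.

Lemma sharp_RDETL_conditions (p0 : P) (pre : 'I_n.+2 -> form A P) :
  pre ord_max = top A p0 -> RDETL_conditions sacc tmp pre.
Proof.
move=> pre_max; split; first exact: sharp_depth_defined.
split; first exact: sharp_knowledge_of_past.
split; first exact: sharp_history_preserving pre_max.
split; first exact: sharp_knowledge_of_initial_time.
split; first exact: sharp_uniqueness_of_past.
exact: sharp_perfect_recall.
Qed.

End SharpActionModel.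

Lemma sharp_inRDETL (A : finType) (P : Type) (p0 : P) (phi : form A P) :
  inRDETL (sharp p0 phi).
Proof.
elim: phi => //= m acc tmp pre IHpre s f IHf.
split; last split; last exact: IHf.
- by move=> t; case: ifP.
- by apply: sharp_RDETL_conditions; rewrite /= ltnn.
Qed.

Theorem lemma30 (A : finType) (P : Type) (p0 : P) (hA : 0 < #|A|)
  (U : amodel A P) :
  atemporal U -> (forall t, inYDEL (@apre A P U t)) ->
  in_Act_RDETL (sharp_am p0 U).
Proof.
move=> _ _; split.
- by move=> t /=; case: ifP => _ //; exact: sharp_inRDETL.
- by apply: sharp_RDETL_conditions; rewrite /= ltnn.
Qed.
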